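(* Let $\mathcal{L}$ be a finite algebraic language, $\mathcal{V}$ an equational class of $\mathcal{L}$-algebras, $\Sigma$ a finite set of $\mathcal{L}$-identities and $X\supseteq\mathrm{Var}(\Sigma)$ a finite set of variables. Consider the condition $(\star)$: whenever $\Sigma\Rightarrow\Delta$ is $\mathcal{V}$-admissible with $\mathrm{Var}(\Delta)\subseteq X$, there exists $\varphi\approx\psi\in\Delta$ such that $\Sigma\Rightarrow\{\varphi\approx\psi\}$ is $\mathcal{V}$-admissible. If $\mathrm{type}(\mathsf{E}_{\mathcal{V}}(\Sigma,X))=1$, then $\Sigma$ satisfies $(\star)$. Conversely, if $\mathrm{type}(\mathsf{E}_{\mathcal{V}}(\Sigma,X))\in\{1,\omega\}$ and $\Sigma$ satisfies $(\star)$, then $\mathrm{type}(\mathsf{E}_{\mathcal{V}}(\Sigma,X))=1$.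
   Context: $\mathbf{Fm}_{\mathcal{L}}(Y)$ is the formula algebra over variables $Y$ ($\omega$ = all variables); $\mathrm{Var}(\Gamma)$ is the set of variables occurring in $\Gamma$; substitutions are homomorphisms of formula algebras. A clause $\Sigma\Rightarrow\Delta$ is a pair of finite sets of identities; a substitution $\sigma\colon\mathbf{Fm}_{\mathcal{L}}(X)\to\mathbf{Fm}_{\mathcal{L}}(\omega)$ is a $\mathcal{V}$-unifier of $\Gamma$ (with $\mathrm{Var}(\Gamma)\subseteq X$) if $\mathcal{V}\models\sigma(\varphi)\approx\sigma(\psi)$ for all $\varphi\approx\psi\in\Gamma$; $\Sigma\Rightarrow\Delta$ is $\mathcal{V}$-admissible if every substitution $\sigma\colon\mathbf{Fm}_{\mathcal{L}}(\mathrm{Var}(\Sigma\cup\Delta))\to\mathbf{Fm}_{\mathcal{L}}(\omega)$ that $\mathcal{V}$-unifies $\Sigma$ also $\mathcal{V}$-unifies some member of $\Delta$. $h_{\mathcal{V}}$ is the canonical homomorphism from $\mathbf{Fm}_{\mathcal{L}}(Y)$ onto the free algebra $\mathbf{F}_{\mathcal{V}}(Y)$. For substitutions over $X$, $\sigma_2\sqsubseteq_{\mathcal{V}}\sigma_1$ iff $\ker(h_{\mathcal{V}}\circ\sigma_1)\subseteq\ker(h_{\mathcal{V}}\circ\sigma_2)$; $\mathsf{E}_{\mathcal{V}}(\Sigma,X)$ is the set of $\mathcal{V}$-unifiers of $\Sigma$ over $X$ preordered by $\sqsubseteq_{\mathcal{V}}$. Types of a preordered set $(P,\le)$: a complete set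 is $M\subseteq P$ with every $x\in P$ below some $y\in M$; a $\mu$-set is a complete set whose distinct elements are pairwise incomparable; all $\mu$-sets have the same cardinality. The type is $0$ (nullary) if there is no $\mu$-set, $\infty$ (infinitary) if there is an infinite $\mu$-set, $\omega$ (finitary) if there is a finite $\mu$-set of cardinality $>1$, and $1$ (unitary) if there is a $\mu$-set of cardinality $1$; types are ordered $1<\omega<\infty<0$. (Type is considered for nonempty preordered sets.) *)

From mathcomp Require Import all_boot.
From Stdlib Require List.
Set Implicit Arguments. Unset Strict Implicit. Unset Printing Implicit Defensive.

Record language := Language { op_sym : finType ; arity : op_sym -> nat }.

(** Formulas (terms) over the countable set of variables omega = nat. *)
Inductive term (L : language) : Type :=
| tVar : nat -> term L
| tApp : forall f : op_sym L, ('I_(arity f) -> term L) -> term L.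
Arguments tVar {L} _.
Arguments tApp {L} f _.

Definition identity (L : language) := (term L * term L)%type.

Fixpoint occurs (L : language) (x : nat) (t : term L) : Prop :=
  match t with
  | tVar y => x = y
  | tApp f a => exists i, occurs x (a i)
  end.

Definition vars_in (L : language) (G : seq (identity L)) (X : seq nat) : Prop :=
  forall e, List.In e G -> forall x, occurs x e.1 \/ occurs x e.2 -> x \in X.

(** Substitutions (homomorphisms of formula algebras) are determined by the
    images of the variables. *)
Fixpoint subst (L : language) (s : nat -> term L) (t : term L) : term L :=
  match t with
  | tVar x => s x
  | tApp f a => tApp f (fun i => subst s (a i))
  end.

Record algebra (L : language) := Algebra {
  carrier :> Type ;
  interp : forall f : op_sym L, ('I_(arity f) -> carrier) -> carrier }.

Fixpoint eval (L : language) (A : algebra L) (v : nat -> A) (t : term L) : A :=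
  match t with
  | tVar x => v x
  | tApp f a => @interp L A f (fun i => eval v (a i))
  end.

Definition holds (L : language) (A : algebra L) (e : identity L) : Prop :=
  forall v : nat -> A, eval v e.1 = eval v e.2.

(** An equational class V is given by a set of defining identities Ax:
    V = Mod(Ax).  V |= s ~ t means every algebra of V satisfies s ~ t. *)
Definition Vsat (L : language) (Ax : identity L -> Prop) (e : identity L) : Prop :=
  forall A : algebra L, (forall a, Ax a -> holds A a) -> holds A e.

Definition unifies (L : language) (Ax : identity L -> Prop) (s : nat -> term L)
  (G : seq (identity L)) : Prop :=
  forall e, List.In e G -> Vsat Ax (subst s e.1, subst s e.2).

(** Sigma => Delta is V-admissible.  (Substitutions on Fm(Var(Sigma u Delta))
    are represented by arbitrary maps nat -> term; only the values on the
    occurring variables matter.) *)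
Definition admissible (L : language) (Ax : identity L -> Prop)
  (S D : seq (identity L)) : Prop :=
  forall s : nat -> term L, unifies Ax s S -> exists2 e, List.In e D & unifies Ax s [:: e].

Definition star (L : language) (Ax : identity L -> Prop) (S : seq (identity L))
  (X : seq nat) : Prop :=
  forall D : seq (identity L), vars_in D X -> admissible Ax S D ->
    exists2 e, List.In e D & admissible Ax S [:: e].

Definition term_over (L : language) (X : seq nat) (t : term L) : Prop :=
  forall x, occurs x t -> x \in X.

(** s2 [=_V s1 iff ker(h_V o s1) is contained in ker(h_V o s2), kernels taken
    on Fm(X). *)
Definition subsumed (L : language) (Ax : identity L -> Prop) (X : seq nat)
  (s2 s1 : nat -> term L) : Prop :=
  forall t u : term L, term_over X t -> term_over X u ->
    Vsat Ax (subst s1 t, subst s1 u) -> Vsat Ax (subst s2 t, subst s2 u).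

(** E_V(Sigma, X): the V-unifiers Fm(X) -> Fm(omega) of Sigma.  A substitution
    with domain Fm(X) is represented canonically by the map nat -> term that is
    the identity outside X. *)
Definition unifiers (L : language) (Ax : identity L -> Prop) (S : seq (identity L))
  (X : seq nat) (s : nat -> term L) : Prop :=
  (forall x, x \notin X -> s x = tVar x) /\ unifies Ax s S.

Definition complete_set (T : Type) (P : T -> Prop) (le : T -> T -> Prop)
  (M : T -> Prop) : Prop :=
  (forall y, M y -> P y) /\ (forall x, P x -> exists2 y, M y & le x y).

Definition mu_set (T : Type) (P : T -> Prop) (le : T -> T -> Prop)
  (M : T -> Prop) : Prop :=
  complete_set P le M /\
  (forall y z, M y -> M z -> y <> z -> ~ le y z /\ ~ le z y).

Definition has_card (T : Type) (M : T -> Prop) (n : nat) : Prop :=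
  exists s : list T, List.NoDup s /\ length s = n /\ (forall x, M x <-> List.In x s).

Definition type_unitary (T : Type) (P : T -> Prop) (le : T -> T -> Prop) : Prop :=
  exists M, mu_set P le M /\ has_card M 1.

Definition type_finitary (T : Type) (P : T -> Prop) (le : T -> T -> Prop) : Prop :=
  exists M n, mu_set P le M /\ has_card M n /\ 1 < n.

From mathcomp Require Import all_boot.
From Stdlib Require List.
From Stdlib Require Import Classical FunctionalExtensionality.
Set Implicit Arguments. Unset Strict Implicit.

(* If the unifiers have a most general element m, an admissible Sigma => Delta
   has a member e unified by m, and every unifier, being below m, unifies e.
   Conversely, if a finite complete set of unifiers has no most general member,
   then for each m in it some unifier is not below m, which yields an identity
   over X unified by m but not by that unifier.  The clause listing these
   separating identities is admissible (every unifier is below some m), yet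
   none of its single identities is, contradicting (star).  So under (star) a
   finite mu-set has a most general member, hence cardinality 1. *)

Lemma eq_subst_occurs (L : language) (s1 s2 : nat -> term L) (t : term L) :
  (forall x, occurs x t -> s1 x = s2 x) -> subst s1 t = subst s2 t.
Proof.
elim: t => [x|f a IH] /= Hs; first exact: Hs.
congr tApp; apply: functional_extensionality => i.
by apply: IH => x Hx; apply: Hs; exists i.
Qed.

Definition identity_over (L : language) (X : seq nat) (e : identity L) : Prop :=
  term_over X e.1 /\ term_over X e.2.

Lemma vars_in_over (L : language) (D : seq (identity L)) X e :
  vars_in D X -> List.In e D -> identity_over X e.
Proof. by move=> HD He; split=> x Hx; apply: (HD e He); [left|right]. Qed.

Lemma unifies1 (L : language) Ax (s : nat -> term L) e :
  unifies Ax s [:: e] <-> Vsat Ax (subst s e.1, subst s e.2).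
Proof. by split=> [|Hs e' [<-|[]]]; [apply; left|]. Qed.

Section Restriction.

Variables (L : language) (Ax : identity L -> Prop) (X : seq nat).

Definition restrict (s : nat -> term L) : nat -> term L :=
  fun x => if x \in X then s x else tVar x.

Lemma subst_restrict s t : term_over X t -> subst (restrict s) t = subst s t.
Proof. by move=> Ht; apply: eq_subst_occurs => x /Ht Hx; rewrite /restrict Hx. Qed.

Lemma restrict_unifies1 s e :
  identity_over X e -> unifies Ax (restrict s) [:: e] <-> unifies Ax s [:: e].
Proof. by case=> H1 H2; rewrite !unifies1 !subst_restrict. Qed.

Lemma restrict_unifier S s :
  vars_in S X -> unifies Ax s S -> unifiers Ax S X (restrict s).
Proof.
move=> HS Hs; split=> [x Hx|e He]; first by rewrite /restrict (negbTE Hx).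
have [H1 H2] := vars_in_over HS He.
by rewrite !subst_restrict //; apply: Hs.
Qed.

End Restriction.

Lemma list_choice (T U : Type) (P : T -> U -> Prop) (l : list T) :
  (forall m, List.In m l -> exists e, P m e) ->
  exists D : list U, (forall m, List.In m l -> exists2 e, List.In e D & P m e) /\
    (forall e, List.In e D -> exists m, P m e).
Proof.
elim: l => [|a l IH] Hl; first by exists nil.
have [e He] := Hl a (or_introl erefl).
have [D [HlD HDl]] := IH (fun m Hm => Hl m (or_intror Hm)).
exists (e :: D); split=> [m [<-|/HlD [e' ? ?]]|e' [<-|/HDl //]].
- by exists e; [left|].
- by exists e'; [right|].
- by exists a.
Qed.

Section Admissibility.

Variables (L : language) (Ax : identity L -> Prop) (S : seq (identity L)).
Variable X : seq nat.
Hypothesis SX : vars_in S X.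

Lemma subsumed_unifies1 (s m : nat -> term L) e :
  subsumed Ax X s m -> identity_over X e ->
  unifies Ax m [:: e] -> unifies Ax s [:: e].
Proof. by move=> Hsm [H1 H2]; rewrite !unifies1; apply: Hsm. Qed.

Lemma admissible_of_complete (l : seq (nat -> term L)) D :
  vars_in D X ->
  (forall s, unifiers Ax S X s -> exists2 m, List.In m l & subsumed Ax X s m) ->
  (forall m, List.In m l -> exists2 e, List.In e D & unifies Ax m [:: e]) ->
  admissible Ax S D.
Proof.
move=> DX Hl Hm s Hs.
have [m ml Hsm] := Hl _ (restrict_unifier SX Hs).
have [e eD Hme] := Hm m ml.
have eX := vars_in_over DX eD.
by exists e => //; apply/(restrict_unifies1 Ax s eX); apply: subsumed_unifies1 Hme.
Qed.

Definition most_general (m : nat -> term L) : Prop :=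
  unifiers Ax S X m /\ forall s, unifiers Ax S X s -> subsumed Ax X s m.

Lemma most_general_star m : most_general m -> star Ax S X.
Proof.
move=> [Hm Hmg] D DX HD.
have [e eD Hme] := HD m (proj2 Hm).
exists e => //; apply: (admissible_of_complete (l := [:: m])) => [||m' [<-|[]]].
- by move=> x [<-|[]]; apply: DX.
- by move=> s Hs; exists m; [left | apply: Hmg].
- by exists e; [left|].
Qed.

Lemma not_subsumed_separating s m :
  ~ subsumed Ax X s m ->
  exists e, identity_over X e /\ unifies Ax m [:: e] /\ ~ unifies Ax s [:: e].
Proof.
move=> Hsm; apply: NNPP => Hno; apply: Hsm => t u Ht Hu Hm; apply: NNPP => Hs.
by apply: Hno; exists (t, u); rewrite !unifies1.
Qed.

Lemma star_most_general (l : seq (nat -> term L)) :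
  (forall m, List.In m l -> unifiers Ax S X m) ->
  (forall s, unifiers Ax S X s -> exists2 m, List.In m l & subsumed Ax X s m) ->
  star Ax S X -> exists2 m, List.In m l & most_general m.
Proof.
move=> Hl Hcompl Hstar; apply: NNPP => Hno.
pose separating m e := identity_over X e /\ unifies Ax m [:: e] /\
  exists2 j, unifiers Ax S X j & ~ unifies Ax j [:: e].
have Hsep m : List.In m l -> exists e, separating m e.
  move=> ml; have [j Hj Hjm] : exists2 j, unifiers Ax S X j & ~ subsumed Ax X j m.
    apply: NNPP => Hall; apply: Hno; exists m => //; split; first exact: Hl.
    by move=> s Hs; apply: NNPP => Hsm; apply: Hall; exists s.
  have [e [eX [Hme Hje]]] := not_subsumed_separating Hjm.
  by exists e; split=> //; split=> //; exists j.
have [D [HlD HDsep]] := list_choice Hsep.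
have DX : vars_in D X.
  move=> e /HDsep [m [[H1 H2] _]] x [/H1|/H2] //.
have HD : admissible Ax S D.
  apply: (admissible_of_complete DX Hcompl) => m /HlD [e eD [_ [Hme _]]].
  by exists e.
have [e /HDsep [m [_ [_ [j Hj Hje]]]] He] := Hstar D DX HD.
have [e' [<-|[]] //] := He j (proj2 Hj).
Qed.

End Admissibility.

Lemma NoDup_other (T : Type) (l : list T) (m : T) :
  List.NoDup l -> 1 < length l -> List.In m l -> exists2 j, List.In j l & j <> m.
Proof.
case: l => [|a [|b l]] // Hnd _ _.
case: (classic (a = m)) => [am|]; last by exists a; [left|].
exists b; [by right; left | move=> bm; subst].
by case/List.NoDup_cons_iff: Hnd => Hb _; apply: Hb; left.
Qed.

Theorem proposition3p4 (L : language) (Ax : identity L -> Prop)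
  (S : seq (identity L)) (X : seq nat) :
  vars_in S X ->
  (type_unitary (unifiers Ax S X) (subsumed Ax X) -> star Ax S X) /\
  ((type_unitary (unifiers Ax S X) (subsumed Ax X) \/
    type_finitary (unifiers Ax S X) (subsumed Ax X)) ->
   star Ax S X -> type_unitary (unifiers Ax S X) (subsumed Ax X)).
Proof.
move=> SX; split.
  move=> [M [[[HMP HMc] _] [[|m [|? ?]] [_ [//= _ HMl]]]]].
  have Mm : M m by apply/HMl; left.
  apply: (most_general_star SX (m := m)); split; first exact: HMP Mm.
  by move=> s /HMc [y /HMl [<-|[]]].
move=> [//|[M [n [[[HMP HMc] Hinc] [[l [Hnd [Hlen HMl]]] Hn]]]]] Hstar.
have [|s Hs|m ml [_ Hmg]] := star_most_general SX (l := l) _ _ Hstar.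
- by move=> m /HMl /HMP.
- by have [m /HMl] := HMc s Hs; exists m.
rewrite -Hlen in Hn; have [j jl Hjm] := NoDup_other Hnd Hn ml.
have [_ Hnle] := Hinc m j (proj2 (HMl m) ml) (proj2 (HMl j) jl) (nesym Hjm).
by case: (Hnle (Hmg j (HMP j (proj2 (HMl j) jl)))).
Qed.
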